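(* Let $D$ be a knot diagram that is ascending from a base point $b$. If a $2$-sided face of $D$ does not admit a Reidemeister II move, or a $3$-sided face of $D$ does not admit a Reidemeister III move, then $b$ lies on the boundary of that face. Moreover, there are at most two such faces in $D$.
   Context: An oriented knot diagram is ascending from a point $b$ (not a crossing) if, travelling along the knot from $b$ in the direction of the orientation, every crossing is first met along its under-strand and later along its over-strand. A $2$-sided face admits a Reidemeister II move when one of its two edges is the over-strand at both of its crossings; a $3$-sided face admits a Reidemeister III move when one of its three edges is the over-strand at both of its crossings (equivalently, it is not the case that each edge has one over- and one under-crossing). *)

From mathcomp Require Import all_boot all_order.
Set Implicit Arguments. Unset Strict Implicit. Unset Printing Implicit Defensive.

(* A knot diagram with m = 2n "visits" (n crossings, each met twice).
   Travelling along the knot, the visits are met in the order 0,1,...,m-1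
   (cyclically); edge e (an arc of the diagram, e : 'I_m) runs from visit e
   to visit e+1 (mod m).
   - kd_pair i  : the other visit of the same crossing;
   - kd_over i  : the strand through visit i is the over-strand;
   - kd_sgn i   : which of the two possible cyclic orders the four half-edges
                  at the crossing have (the planar rotation system). *)
Record knot_diagram (m : nat) := KD {
  kd_pair : 'I_m -> 'I_m;
  kd_over : 'I_m -> bool;
  kd_sgn  : 'I_m -> bool
}.

Section KD.
Variables (m : nat) (D : knot_diagram m).

(* half-edges: (e, false) = tail half of edge e (at visit e),
               (e, true)  = head half of edge e (at visit e+1). *)
Definition dart := ('I_m * bool)%type.

Definition dart_visit (h : dart) : 'I_m :=
  if h.2 then ordS h.1 else h.1.

Definition in_half (i : 'I_m) : dart := (ord_pred i, true).
Definition out_half (i : 'I_m) : dart := (i, false).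

Definition dart_flip (h : dart) : dart := (h.1, ~~ h.2).

(* rotation sigma around a crossing with visits i and j = pair i:
   if sgn i : in_i -> in_j -> out_i -> out_j -> in_i
   else      : in_i -> out_j -> out_i -> in_j -> in_i   *)
Definition dart_rot (h : dart) : dart :=
  let i := dart_visit h in
  let j := kd_pair D i in
  if h.2 then (if kd_sgn D i then in_half j else out_half j)
  else (if kd_sgn D i then out_half j else in_half j).

(* face permutation phi = sigma o alpha; faces = orbits of phi *)
Definition face_perm (h : dart) : dart := dart_rot (dart_flip h).

(* well-formedness: a genuine knot diagram on the sphere
   (Euler: V - E + F = n - 2n + F = 2, i.e. F = n + 2). *)
Definition kd_wf : Prop :=
  0 < m /\
  [/\ (forall i, kd_pair D (kd_pair D i) = i),
      (forall i, kd_pair D i != i),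
      (forall i, kd_over D (kd_pair D i) = ~~ kd_over D i),
      (forall i, kd_sgn D (kd_pair D i) = ~~ kd_sgn D i)
    & fcard face_perm predT = m./2 + 2].

(* position of visit i when travelling from a base point on edge k *)
Definition pos (k i : 'I_m) : nat := (i + m - k.+1) %% m.

(* ascending from base point b lying on edge k (b is not a crossing):
   at every crossing the visit met first is along the under-strand *)
Definition ascending (k : 'I_m) : Prop :=
  forall i : 'I_m, pos k i < pos k (kd_pair D i) -> kd_over D i = false.

Definition face_sides (h : dart) : nat := order face_perm h.

Definition face_of (h : dart) : {set dart} := [set x | fconnect face_perm h x].

Definition edge_over_both (e : 'I_m) : bool := kd_over D e && kd_over D (ordS e).

Definition face_has_over_edge (h : dart) : bool :=
  [exists x : dart, fconnect face_perm h x && edge_over_both x.1].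

Definition admits_R2 (h : dart) : bool := (face_sides h == 2) && face_has_over_edge h.
Definition admits_R3 (h : dart) : bool := (face_sides h == 3) && face_has_over_edge h.

Definition bad_face (h : dart) : bool :=
  ((face_sides h == 2) && ~~ admits_R2 h) || ((face_sides h == 3) && ~~ admits_R3 h).

Definition on_face_boundary (h : dart) (k : 'I_m) : Prop :=
  exists b : bool, fconnect face_perm h (k, b).

End KD.

(** Walk around a face that avoids the base point and has no edge over at both
    ends.  Whether the strand through a corner is over is then the same at
    every corner, and the ascending condition forces the distance from the base
    point to change monotonically from corner to corner (increasing when the
    corners are over, decreasing when they are under).  Around a closed face
    this distance must be constant, which pins every corner to one crossing
    and makes the face a monogon.  A bad 2- or 3-gon therefore borders the edge
    carrying the base point, and only two faces border that edge. *)

From mathcomp Require Import all_boot all_order.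
From mathcomp Require Import zify.
Set Implicit Arguments. Unset Strict Implicit. Unset Printing Implicit Defensive.

Section OrbitMonotone.

Variables (T : finType) (f : T -> T) (R : Type) (r : rel R) (w : T -> R).
Hypotheses (f_inj : injective f) (r_refl : reflexive r) (r_trans : transitive r)
  (r_anti : antisymmetric r).

Lemma fconnect_mono_const h :
  (forall x, fconnect f h x -> r (w x) (w (f x))) ->
  forall x, fconnect f h x -> w x = w h.
Proof.
move=> w_mono.
have w_up x y : fconnect f h x -> fconnect f x y -> r (w x) (w y).
  move=> hx /iter_findex <-; elim: (findex f x y) => [|n IHn] //=.
  apply: r_trans IHn (w_mono _ _).
  exact: connect_trans hx (fconnect_iter _ _ _).
move=> x hx; apply: r_anti.
by rewrite !w_up ?connect0 // fconnect_sym.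
Qed.

End OrbitMonotone.

Lemma order_gt1_neq (T : finType) (f : T -> T) x : 1 < order f x -> f x != x.
Proof.
move=> gt1; have := orbit_uniq f x; rewrite /orbit.
by case: (order f x) gt1 => [|[|n]] //= _; rewrite !inE negb_or eq_sym => /andP[/andP[]].
Qed.

Lemma implb_anti : antisymmetric implb.
Proof. by case; case. Qed.

Lemma implb_trans : transitive implb.
Proof. by case; case; case. Qed.

Definition pos_order (b : bool) : rel nat := if b then leq else geq.

Lemma pos_order_refl b : reflexive (pos_order b).
Proof. by case: b => n /=. Qed.

Lemma pos_order_trans b : transitive (pos_order b).
Proof. by case: b => n p q /=; [apply: leq_trans | move=> pn np; apply: leq_trans np pn]. Qed.

Lemma pos_order_anti b : antisymmetric (pos_order b).
Proof. by case: b => p q /=; [apply: anti_leq | rewrite andbC => /anti_leq]. Qed.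

Lemma posE m (k i : 'I_m) : pos k i = if k < i then i - k.+1 else i + m - k.+1.
Proof.
have := ltn_ord i; have := ltn_ord k; rewrite /pos => ? ?.
case: ifP => lt_ki; last by rewrite modn_small //; lia.
have -> : i + m - k.+1 = (i - k.+1) + m by lia.
by rewrite modnDr modn_small //; lia.
Qed.

Lemma pos_inj m (k : 'I_m) : injective (pos k).
Proof.
move=> i j; have := ltn_ord i; have := ltn_ord j; have := ltn_ord k.
rewrite !posE => ? ? ? eq_ij; apply: ord_inj; move: eq_ij.
by do 2 case: ifP => ?; lia.
Qed.

Lemma pos_ordS m (k e : 'I_m) : e != k -> pos k (ordS e) = (pos k e).+1.
Proof.
move=> ne_ek; have := ltn_ord e; have := ltn_ord k; rewrite !posE => ? ?.
have -> : nat_of_ord (ordS e) = if e.+1 < m then e.+1 else 0.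
  by case: ifP => /= lt_em; [rewrite modn_small | rewrite (_ : e.+1 = m) ?modnn //; lia].
have : nat_of_ord e <> k by move/ord_inj/eqP; rewrite (negbTE ne_ek).
by case: (ltnP e.+1 m) => ? /=; repeat case: ifP => ?; lia.
Qed.

Section Darts.

Variables (m : nat) (D : knot_diagram m).

Lemma dart_visit_in_half (i : 'I_m) : dart_visit (in_half i) = i.
Proof. exact: ord_predK. Qed.

Lemma dart_visit_rot h : dart_visit (dart_rot D h) = kd_pair D (dart_visit h).
Proof. by rewrite /dart_rot; case: h.2; case: kd_sgn; rewrite ?dart_visit_in_half. Qed.

Lemma dart_rot_side h :
  (dart_rot D h).2 = if h.2 then kd_sgn D (dart_visit h) else ~~ kd_sgn D (dart_visit h).
Proof. by rewrite /dart_rot; case: h.2; case: kd_sgn. Qed.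

Lemma dart_visit_side_inj (h1 h2 : dart m) :
  dart_visit h1 = dart_visit h2 -> h1.2 = h2.2 -> h1 = h2.
Proof.
case: h1 h2 => [e1 s1] [e2 s2] /= + eq_side; rewrite {}eq_side /dart_visit /=.
by case: s2 => [/ordS_inj -> | ->].
Qed.

Lemma face_perm_inj : involutive (kd_pair D) -> injective (face_perm D).
Proof.
move=> pairK h1 h2 eq_fp.
have eq_visit : dart_visit (dart_flip h1) = dart_visit (dart_flip h2).
  by apply: (inv_inj pairK); rewrite -!dart_visit_rot; congr dart_visit.
have := congr1 snd eq_fp; rewrite /face_perm !dart_rot_side eq_visit => eq_side.
have : dart_flip h1 = dart_flip h2.
  by apply: dart_visit_side_inj => //; move: eq_side; do 2 case: (_.2); case: kd_sgn.
by case: h1 h2 {eq_fp eq_visit eq_side} => [e1 s1] [e2 s2] [-> /(inv_inj negbK) ->].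
Qed.

Lemma bad_face_sides_over h :
  bad_face D h -> 1 < face_sides D h /\ ~~ face_has_over_edge D h.
Proof.
rewrite /bad_face /admits_R2 /admits_R3.
by case/orP => /andP[/eqP sides_h]; rewrite sides_h.
Qed.

Lemma face_of_fconnect h x :
  involutive (kd_pair D) -> fconnect (face_perm D) h x -> face_of D h = face_of D x.
Proof.
move=> pairK hx; apply/setP => y; rewrite !inE.
exact: (same_connect (fconnect_sym (face_perm_inj pairK)) hx).
Qed.

End Darts.

Section Ascending.

Variables (m : nat) (D : knot_diagram m) (k : 'I_m).
Hypotheses (pairK : involutive (kd_pair D)) (pair_neq : forall i, kd_pair D i != i)
  (over_pair : forall i, kd_over D (kd_pair D i) = ~~ kd_over D i)
  (asc : ascending D k).

Local Notation fp := (face_perm D).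
Local Notation vpos x := (pos k (dart_visit x)).
Local Notation vover x := (kd_over D (dart_visit x)).

Lemma pos_pair_neq i : pos k (kd_pair D i) != pos k i.
Proof. by apply: contraNneq (pair_neq i) => /pos_inj ->. Qed.

Lemma ascending_posE i : (pos k i < pos k (kd_pair D i)) = ~~ kd_over D i.
Proof.
have := pos_pair_neq i.
case: (ltngtP (pos k i) (pos k (kd_pair D i))) => [lt_i _ | gt_i _ | //].
  by rewrite asc.
by have := @asc (kd_pair D i); rewrite pairK over_pair => /(_ gt_i) ->.
Qed.

Lemma face_perm_pos x : x.1 != k ->
  pos_order (vover (fp x)) (vpos x) (vpos (fp x)) /\
  (vpos (fp x) = vpos x -> x.2 = vover (fp x)).
Proof.
case: x => e s /= ne_ek.
rewrite /face_perm dart_visit_rot over_pair -ascending_posE.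
have := pos_pair_neq (dart_visit (dart_flip (e, s))).
have := pos_ordS ne_ek.
case: s; rewrite /dart_visit /= => ? /eqP ?; case: ltnP => /= ?; split => *; lia.
Qed.

Lemma over_face_perm x : ~~ edge_over_both D x.1 -> vover x ==> vover (fp x).
Proof.
case: x => e s; rewrite /face_perm dart_visit_rot over_pair /edge_over_both /dart_visit /=.
by case: s; case: (kd_over D e); case: (kd_over D (ordS e)).
Qed.

Lemma face_meets_base h : 1 < face_sides D h -> ~~ face_has_over_edge D h ->
  [exists x, fconnect fp h x && (x.1 == k)].
Proof.
move=> sides /existsPn no_over; apply: contraT => /existsPn off_base.
have fp_inj := face_perm_inj pairK.
have off_k x : fconnect fp h x -> x.1 != k.
  by move=> hx; have := off_base x; rewrite hx.
have not_over x : fconnect fp h x -> ~~ edge_over_both D x.1.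
  by move=> hx; have := no_over x; rewrite hx.
have face_fp x : fconnect fp h x -> fconnect fp h (fp x).
  by move=> hx; apply: connect_trans hx (fconnect1 _ _).
have over_const : forall x, fconnect fp h x -> vover x = vover h.
  apply: (fconnect_mono_const fp_inj implybb implb_trans implb_anti) => x hx.
  exact: over_face_perm (not_over x hx).
have pos_const : forall x, fconnect fp h x -> vpos x = vpos h.
  apply: (fconnect_mono_const fp_inj (pos_order_refl (vover h))
            (@pos_order_trans _) (@pos_order_anti _)) => x hx.
  by rewrite -(over_const _ (face_fp x hx)); exact: (face_perm_pos (off_k x hx)).1.
have side_const x : fconnect fp h x -> x.2 = vover h.
  move=> hx; rewrite -(over_const _ (face_fp x hx)).
  by apply: (face_perm_pos (off_k x hx)).2; rewrite (pos_const _ hx) (pos_const _ (face_fp x hx)).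
have h_h : fconnect fp h h := connect0 _ h.
have fp_h : fp h = h.
  apply: dart_visit_side_inj; first by apply: (@pos_inj _ k); rewrite (pos_const _ (face_fp h h_h)).
  by rewrite (side_const _ h_h) (side_const _ (face_fp h h_h)).
by have := order_gt1_neq sides; rewrite fp_h eqxx.
Qed.

Lemma bad_face_on_base h : bad_face D h -> on_face_boundary D h k.
Proof.
case/bad_face_sides_over => sides no_over.
have /existsP[[e b] /andP[hx /eqP /= e_k]] := face_meets_base sides no_over.
by exists b; rewrite -e_k.
Qed.

End Ascending.

Theorem lemma5p6 (m : nat) (D : knot_diagram m) (k : 'I_m) :
  kd_wf D -> ascending D k ->
  (forall h : dart m, bad_face D h -> on_face_boundary D h k) /\
  #|[set face_of D h | h in [pred h | bad_face D h]]| <= 2.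
Proof.
move=> [_ [pairK pair_neq over_pair _ _]] asc.
have on_base := bad_face_on_base pairK pair_neq over_pair asc.
split=> //.
apply: (@leq_trans #|[set face_of D (k, false); face_of D (k, true)]|).
  apply/subset_leq_card/subsetP => _ /imsetP[h bad_h ->].
  have [b hb] := on_base h bad_h.
  by rewrite (face_of_fconnect pairK hb) !inE; case: b {hb}; rewrite eqxx ?orbT.
by rewrite cards2 ltnS leq_b1.
Qed.
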